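(* Let $G$ be an $\alpha_i$-metric graph ($i\ge 0$ an integer) and $k$ a positive integer. Then for every vertex $v$ of $G$ with $e(v)\le rad(G)+k$, $d(v,C(G))\le k+i$.
   Context: All graphs are finite, connected, unweighted, undirected, simple; $d(u,v)$ is the shortest-path distance and $d(v,S)=\min_{s\in S}d(v,s)$. $I(u,v)=\{x: d(u,x)+d(x,v)=d(u,v)\}$. A graph is $\alpha_i$-metric if for all vertices $u,v,w,x$: whenever $v\in I(u,w)$, $w\in I(v,x)$ and $v,w$ are adjacent, then $d(u,x)\ge d(u,v)+d(v,x)-i$. $e(v)=\max_u d(u,v)$, $rad(G)=\min_v e(v)$, $C(G)=\{v:e(v)=rad(G)\}$. *)

From mathcomp Require Import all_boot.
Set Implicit Arguments. Unset Strict Implicit. Unset Printing Implicit Defensive.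

Definition simple_graph (T : finType) (e : rel T) : Prop :=
  symmetric e /\ irreflexive e.

Fixpoint nball (T : finType) (e : rel T) (u : T) (n : nat) : {set T} :=
  match n with
  | 0 => [set u]
  | n'.+1 => nball e u n' :|: [set y | [exists x in nball e u n', e x y]]
  end.

Definition connected_graph (T : finType) (e : rel T) : Prop :=
  forall u v : T, v \in nball e u #|T|.

(* Shortest-path distance: least n with v within n steps of u
   (for connected graphs this is attained below #|T|). *)
Definition dist (T : finType) (e : rel T) (u v : T) : nat :=
  find (fun n => v \in nball e u n) (iota 0 #|T|.+1).

Definition in_interval (T : finType) (e : rel T) (u w x : T) : bool :=
  dist e u x + dist e x w == dist e u w.

Definition alpha_metric (T : finType) (e : rel T) (i : nat) : Prop :=
  forall u v w x : T,
    in_interval e u w v -> in_interval e v x w -> e v w ->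
    dist e u v + dist e v x <= dist e u x + i.

Definition ecc (T : finType) (e : rel T) (v : T) : nat :=
  \max_(u : T) dist e u v.

(* rad(G) = min_v e(v); the neutral element #|T| exceeds every eccentricity
   of a connected graph, so it never affects the value when T is nonempty. *)
Definition radius (T : finType) (e : rel T) : nat :=
  \big[minn/#|T|]_(v : T) ecc e v.

Definition center (T : finType) (e : rel T) : {set T} :=
  [set v | ecc e v == radius e].

Definition dist_set (T : finType) (e : rel T) (v : T) (S : {set T}) : nat :=
  \big[minn/#|T|]_(s in S) dist e v s.

(** Let c be a central vertex closest to v and suppose d(v,c) > 0.  The
    neighbour z of c on a geodesic from c to v is closer to v, hence not
    central, so e(z) > rad(G).  A vertex u farthest from z then satisfies
    d(u,z) = rad(G) + 1 and d(u,c) = rad(G), i.e. c lies on a geodesic from u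
    to z, while z lies on a geodesic from c to v.  The alpha_i-metric
    inequality gives rad(G) + d(c,v) <= d(u,v) + i <= e(v) + i <= rad(G) + k + i. *)
From mathcomp Require Import all_boot order zify.
Set Implicit Arguments. Unset Strict Implicit. Unset Printing Implicit Defensive.

Import Order.TTheory.

Section GraphDistance.

Variables (T : finType) (e : rel T).
Hypotheses (e_sym : symmetric e) (e_irr : irreflexive e) (e_conn : connected_graph e).

Lemma in_nballS u n v :
  (v \in nball e u n.+1) = (v \in nball e u n) || [exists x in nball e u n, e x v].
Proof. by rewrite /= in_setU in_set. Qed.

Lemma subset_nball u m n : m <= n -> nball e u m \subset nball e u n.
Proof.
move=> /subnKC <-; elim: (n - m) => [|k IHk]; first by rewrite addn0.
by apply/subsetP=> v /(subsetP IHk) v_in; rewrite addnS in_nballS v_in.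
Qed.

Lemma nball_trans u x y m n :
  x \in nball e u m -> y \in nball e x n -> y \in nball e u (m + n).
Proof.
move=> x_in; elim: n y => [|n IHn] y; first by rewrite addn0 in_set1 => /eqP ->.
rewrite addnS !in_nballS => /orP[/IHn -> // | /existsP[w /andP[w_in e_wy]]].
by apply/orP; right; apply/existsP; exists w; rewrite IHn.
Qed.

Lemma nball_sym u v n : v \in nball e u n -> u \in nball e v n.
Proof.
elim: n u v => [|n IHn] u v; first by rewrite !in_set1 eq_sym.
rewrite in_nballS => /orP[/IHn | /existsP[w /andP[w_in e_wv]]].
  exact/subsetP/subset_nball.
have w_near_v : w \in nball e v 1.
  by rewrite in_nballS; apply/orP; right; apply/existsP; exists v;
     rewrite in_set1 eqxx e_sym.
exact: nball_trans w_near_v (IHn _ _ w_in).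
Qed.

Lemma dist_min u v n : v \in nball e u n -> dist e u v <= n.
Proof.
suff dist_min_small m : m <= #|T| -> v \in nball e u m -> dist e u v <= m.
  move=> v_in; have [n_small | n_large] := leqP n #|T|; first exact: dist_min_small.
  exact: leq_trans (dist_min_small _ (leqnn _) (e_conn u v)) (ltnW n_large).
move=> m_small v_in; rewrite leqNgt; apply/negP => m_lt.
by have := before_find 0 m_lt; rewrite nth_iota ?ltnS // add0n v_in.
Qed.

Lemma nball_dist u v : v \in nball e u (dist e u v).
Proof.
have reached : has (fun n => v \in nball e u n) (iota 0 #|T|.+1).
  by apply/hasP; exists #|T|; rewrite ?mem_iota ?add0n ?ltnSn ?e_conn.
have := nth_find 0 reached; rewrite has_find size_iota in reached.
by rewrite nth_iota // add0n.
Qed.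

Lemma mem_nball u v n : (v \in nball e u n) = (dist e u v <= n).
Proof.
apply/idP/idP => [|dist_le]; first exact: dist_min.
exact: subsetP (subset_nball u dist_le) _ (nball_dist u v).
Qed.

Lemma dist_sym u v : dist e u v = dist e v u.
Proof.
by apply/anti_leq/andP; split; rewrite -mem_nball; apply/nball_sym/nball_dist.
Qed.

Lemma dist_triangle u x y : dist e u y <= dist e u x + dist e x y.
Proof. by rewrite -mem_nball; apply: nball_trans (nball_dist u x) (nball_dist x y). Qed.

Lemma dist_eq0 u v : (dist e u v == 0) = (u == v).
Proof. by rewrite -leqn0 -mem_nball in_set1 eq_sym. Qed.

Lemma dist_edge u v : e u v -> dist e u v = 1.
Proof.
move=> e_uv; apply/eqP; rewrite eqn_leq -mem_nball lt0n dist_eq0.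
rewrite in_nballS; apply/andP; split.
  by apply/orP; right; apply/existsP; exists u; rewrite in_set1 eqxx.
by apply: contraTneq e_uv => ->; rewrite e_irr.
Qed.

Lemma dist_leq_card u v : dist e u v <= #|T|.
Proof. exact: dist_min (e_conn u v). Qed.

Lemma closer_neighbor c v :
  0 < dist e c v -> exists2 z, e c z & dist e z v < dist e c v.
Proof.
rewrite dist_sym; case d_vc: (dist e v c) => [|d] // _.
have := nball_dist v c; rewrite d_vc in_nballS.
case/orP => [|/existsP[z /andP[z_in e_zc]]]; first by rewrite mem_nball d_vc ltnn.
by exists z; rewrite 1?e_sym // dist_sym ltnS -mem_nball.
Qed.

Lemma dist_leq_ecc u v : dist e u v <= ecc e v.
Proof. exact: (@leq_bigmax T (fun u => dist e u v)). Qed.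

Lemma ecc_leq_card v : ecc e v <= #|T|.
Proof. by apply/bigmax_leqP => u _; apply: dist_leq_card. Qed.

Lemma radius_leq_ecc v : radius e <= ecc e v.
Proof. exact: (@bigmin_le_cond _ nat T #|T| v predT (ecc e)). Qed.

Lemma center_nonempty (v : T) : exists c, c \in center e.
Proof.
have radius_arg := @bigmin_eq_arg _ nat T #|T| v predT (ecc e) isT.
by eexists; rewrite inE /radius radius_arg // => u _; apply: ecc_leq_card.
Qed.

Lemma dist_set_leq v (S : {set T}) c : c \in S -> dist_set e v S <= dist e v c.
Proof. exact: (@bigmin_le_cond _ nat T #|T| c (mem S) (dist e v)). Qed.

Variable i : nat.
Hypothesis e_alpha : alpha_metric e i.

Lemma dist_center_leq_ecc c z v :
  c \in center e -> z \notin center e -> e c z -> dist e z v < dist e c v ->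
  dist e c v + radius e <= ecc e v + i.
Proof.
rewrite !inE => /eqP ecc_c z_off_center e_cz z_closer.
have ecc_z_gt : radius e < ecc e z.
  by rewrite ltn_neqAle eq_sym z_off_center radius_leq_ecc.
have [u _ u_far] : {u | u \in predT & ecc e z = dist e u z}.
  by apply: eq_bigmax_cond; apply/card_gt0P; exists z.
have d_cz := dist_edge e_cz.
have d_uc : dist e u c = radius e.
  by have := dist_leq_ecc u c; have := dist_triangle u c z; lia.
have c_between : in_interval e u z c.
  by apply/eqP; have := dist_triangle u c z; lia.
have z_between : in_interval e c v z.
  by apply/eqP; have := dist_triangle c z v; lia.
have := e_alpha c_between z_between e_cz; have := dist_leq_ecc u v.
lia.
Qed.

End GraphDistance.

Theorem lemma8 (T : finType) (e : rel T) (i k : nat) :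
  simple_graph e -> connected_graph e -> alpha_metric e i -> 0 < k ->
  forall v : T, ecc e v <= radius e + k ->
    dist_set e v (center e) <= k + i.
Proof.
move=> [e_sym e_irr] e_conn e_alpha _ v ecc_v.
have [c0 c0_center] := center_nonempty e_conn v.
have [c c_center c_closest] := arg_minnP (dist e v) c0_center.
apply: leq_trans (dist_set_leq e v c_center) _.
have [-> // | dist_vc_gt0] := posnP (dist e v c).
rewrite (dist_sym e_sym e_conn) in dist_vc_gt0 *.
have [z e_cz z_closer] := closer_neighbor e_sym e_conn dist_vc_gt0.
have z_off_center : z \notin center e.
  apply: contraTN z_closer => /c_closest.
  by rewrite -leqNgt !(dist_sym e_sym e_conn v).
have := dist_center_leq_ecc e_irr e_conn e_alpha c_center z_off_center e_cz z_closer.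
lia.
Qed.
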